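(* Let $S$ be an inverse monoid with zero, let $R$ be a unital ring, and let $\theta\colon S\to R$ be a representation. Let $\beta\colon S\to\mathsf{B}(S)$ be the Booleanization of $S$. Then there is a unique additive representation $\theta^{\ast}\colon\mathsf{B}(S)\to R$ such that $\theta^{\ast}(\beta(s))=\theta(s)$ for all $s\in S$.
   Context: A representation of an inverse monoid with zero $S$ in a unital ring $R$ is a monoid homomorphism from $S$ to the multiplicative monoid of $R$ mapping zero to $0$. Elements $a,b$ are orthogonal if $a^{-1}b=0=ab^{-1}$, compatible if $a^{-1}b,ab^{-1}$ are idempotents. A Boolean inverse monoid is an inverse monoid with zero having joins of compatible pairs (natural partial order), multiplication distributing over them, and idempotents forming a generalized Boolean algebra. If $S$ is a Boolean inverse monoid, a representation $\phi\colon S\to R$ is additive if $a\perp b$ implies $\phi(a\vee b)=\phi(a)+\phi(b)$. The Booleanization of $S$ is the Boolean inverse semigroup $\mathsf{B}(S)$ with an injective zero-preserving homomorphism $\beta$ such that every zero-preserving homomorphism from $S$ to a Boolean inverse semigroup $T$ factors uniquely as $\gamma\circ\beta$ with $\gamma$ a zero-preserving homomorphism preserving joins of compatible pairs; when $S$ is a monoid, $\mathsf{B}(S)$ is a monoid and $\beta$ a monoid homomorphism. *)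

From mathcomp Require Import all_boot all_algebra.
Set Implicit Arguments.
Unset Strict Implicit.
Unset Printing Implicit Defensive.
Import GRing.Theory.

Record InvSemigroup0 := {
  isg_car :> Type;
  isg_mul : isg_car -> isg_car -> isg_car;
  isg_inv : isg_car -> isg_car;
  isg_zero : isg_car;
  isg_mulA : forall a b c, isg_mul a (isg_mul b c) = isg_mul (isg_mul a b) c;
  isg_inv1 : forall a, isg_mul (isg_mul a (isg_inv a)) a = a;
  isg_inv2 : forall a, isg_mul (isg_mul (isg_inv a) a) (isg_inv a) = isg_inv a;
  isg_inv_uniq : forall a b, isg_mul (isg_mul a b) a = a ->
                   isg_mul (isg_mul b a) b = b -> b = isg_inv a;
  isg_mul0l : forall a, isg_mul isg_zero a = isg_zero;
  isg_mul0r : forall a, isg_mul a isg_zero = isg_zero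
}.

Record InvMonoid0 := {
  im_sg :> InvSemigroup0;
  im_one : im_sg;
  im_mul1l : forall a, isg_mul im_one a = a;
  im_mul1r : forall a, isg_mul a im_one = a
}.

Section Notions.
Variable S : InvSemigroup0.
Local Notation "a * b" := (isg_mul a b).
Local Notation "a ^-1" := (isg_inv a).

Definition idem (e : S) : Prop := e * e = e.

(* natural partial order: a <= b iff a = b a^-1 a (i.e. a = b e, e idempotent) *)
Definition nle (a b : S) : Prop := a = b * (a^-1 * a).

Definition orthogonal (a b : S) : Prop :=
  a^-1 * b = isg_zero S /\ a * b^-1 = isg_zero S.

Definition compatible (a b : S) : Prop := idem (a^-1 * b) /\ idem (a * b^-1).

Definition is_join (a b j : S) : Prop :=
  nle a j /\ nle b j /\ forall c, nle a c -> nle b c -> nle j c.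

Definition is_joinE (e f j : S) : Prop :=
  idem j /\ nle e j /\ nle f j /\ forall c, idem c -> nle e c -> nle f c -> nle j c.

(* E(S) (meets are products, bottom is 0) is a generalized Boolean algebra:
   a distributive lattice with least element in which every interval [0,f]
   is complemented. *)
Definition idem_gen_boolean : Prop :=
  (forall e f, idem e -> idem f -> exists j, is_joinE e f j) /\
  (forall e f g j, idem e -> idem f -> idem g -> is_joinE f g j ->
       is_joinE (e * f) (e * g) (e * j)) /\
  (forall e f, idem e -> idem f -> nle e f ->
       exists g, idem g /\ e * g = isg_zero S /\ is_joinE e g f).

Definition is_boolean : Prop :=
  (forall a b, compatible a b -> exists j, is_join a b j) /\
  (forall a b j c, compatible a b -> is_join a b j ->
       is_join (c * a) (c * b) (c * j) /\ is_join (a * c) (b * c) (j * c)) /\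
  idem_gen_boolean.
End Notions.

Definition zhom (S T : InvSemigroup0) (f : S -> T) : Prop :=
  (forall a b, f (isg_mul a b) = isg_mul (f a) (f b)) /\ f (isg_zero S) = isg_zero T.

Definition preserves_compatible_joins (S T : InvSemigroup0) (f : S -> T) : Prop :=
  forall a b j, compatible a b -> is_join a b j -> is_join (f a) (f b) (f j).

Definition monoid_hom (S T : InvMonoid0) (f : S -> T) : Prop :=
  (forall a b, f (isg_mul a b) = isg_mul (f a) (f b)) /\ f (im_one S) = im_one T.

Definition is_booleanization (S B : InvMonoid0) (beta : S -> B) : Prop :=
  is_boolean B /\ zhom beta /\ monoid_hom beta /\ injective beta /\
  forall (T : InvSemigroup0) (f : S -> T), is_boolean T -> zhom f ->
    exists! g : B -> T, zhom g /\ preserves_compatible_joins g /\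
                        forall s, g (beta s) = f s.

Definition representation (S : InvMonoid0) (R : pzRingType) (th : S -> R) : Prop :=
  (forall a b, th (isg_mul a b) = (th a * th b)%R) /\
  th (im_one S) = 1%R /\ th (isg_zero S) = 0%R.

Definition additive_rep (B : InvMonoid0) (R : pzRingType) (th : B -> R) : Prop :=
  representation th /\
  forall a b j, orthogonal a b -> is_join a b j -> th j = (th a + th b)%R.

(* The universal property of the Booleanization only speaks about Boolean inverse
   semigroups, so a representation psi : M -> R is first realised inside one.  Let E be the
   Boolean algebra of commuting idempotents of R generated by psi(E(M)) (closed under
   products and p |-> 1 - p), and call (x, y) a generated pair if it is built from the pairs
   (psi s, psi s^-1) and (p, p), p in E, by products and orthogonal sums.  The first
   components x form an inverse subsemigroup hull(psi) of R in which y is the inverse of x;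
   it is Boolean, orthogonal joins being sums and the join of compatible a, b being
   a + b (1 - a^-1 a).
   The universal property applied to theta : S -> hull(theta) yields theta*, which is
   additive because orthogonal joins are sums.  An additive extension phi of theta is a
   join-preserving map B(S) -> hull(phi), and so is theta* followed by the inclusion
   hull(theta) <= hull(phi); both extend the same map on S, hence they coincide. *)

From Pilot Require Import Defs.
From mathcomp Require Import all_boot all_algebra.
From Stdlib Require Import ClassicalEpsilon ProofIrrelevance FunctionalExtensionality.
Set Implicit Arguments.
Unset Strict Implicit.
Unset Printing Implicit Defensive.
Import GRing.Theory.

(** * The natural partial order and joins *)

Section InverseSemigroup.
Variable S : InvSemigroup0.
Local Notation "a * b" := (isg_mul a b).
Local Notation "a ^-1" := (isg_inv a).
Local Notation "0" := (isg_zero S).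
Implicit Types a b c e f g j : S.

Lemma mul_inv_mul a : a * a^-1 * a = a. Proof. exact: isg_inv1. Qed.
Lemma inv_mul_inv a : a^-1 * a * a^-1 = a^-1. Proof. exact: isg_inv2. Qed.

Lemma mul_inv_mulr c a : c * a * a^-1 * a = c * a.
Proof. by rewrite -!isg_mulA (isg_mulA a) mul_inv_mul. Qed.

Lemma inv_mul_invr c a : c * a^-1 * a * a^-1 = c * a^-1.
Proof. by rewrite -!isg_mulA (isg_mulA _ a) inv_mul_inv. Qed.

Lemma invK a : (a^-1)^-1 = a.
Proof. by symmetry; apply: isg_inv_uniq; [exact: inv_mul_inv | exact: mul_inv_mul]. Qed.

Lemma idem_inv e : idem e -> e^-1 = e.
Proof. by move=> he; symmetry; apply: isg_inv_uniq; rewrite !he. Qed.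

Lemma mulr_idem c e : idem e -> c * e * e = c * e.
Proof. by move=> he; rewrite -isg_mulA he. Qed.

Lemma idem_mulV a : idem (a * a^-1).
Proof. by rewrite /idem isg_mulA mul_inv_mul. Qed.

Lemma idem_Vmul a : idem (a^-1 * a).
Proof. by rewrite /idem isg_mulA inv_mul_inv. Qed.

Lemma idem0 : idem 0.
Proof. exact: isg_mul0l. Qed.

(* The inverse x of e f satisfies x = f x e, which forces x to be idempotent. *)
Lemma idem_mul e f : idem e -> idem f -> idem (e * f).
Proof.
move=> he hf; set x := (e * f)^-1.
have fxe : f * x * e = x.
  apply: isg_inv_uniq.
    by rewrite !isg_mulA (mulr_idem _ hf) (mulr_idem _ he) -(isg_mulA _ e f) mul_inv_mul.
  by rewrite !isg_mulA (mulr_idem _ he) (mulr_idem _ hf) -(isg_mulA (f * x) e f) inv_mul_invr.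
have idem_x : idem x.
  by rewrite /idem -fxe !isg_mulA -(isg_mulA (f * x) e f) inv_mul_invr.
by rewrite -(invK (e * f)) -/x idem_inv.
Qed.

Lemma idem_comm e f : idem e -> idem f -> e * f = f * e.
Proof.
move=> he hf; rewrite -(idem_inv (idem_mul he hf)); symmetry; apply: isg_inv_uniq.
  by rewrite !isg_mulA (mulr_idem _ hf) (mulr_idem _ he) -isg_mulA idem_mul.
by rewrite !isg_mulA (mulr_idem _ he) (mulr_idem _ hf) -isg_mulA (idem_mul hf he).
Qed.

Lemma inv_mul a b : (a * b)^-1 = b^-1 * a^-1.
Proof.
symmetry; apply: isg_inv_uniq.
  rewrite (_ : _ * _ = a * ((b * b^-1) * (a^-1 * a)) * b); last by rewrite !isg_mulA.
  by rewrite (idem_comm (idem_mulV b) (idem_Vmul a)) !isg_mulA mul_inv_mul mul_inv_mulr.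
rewrite (_ : _ * _ = b^-1 * ((a^-1 * a) * (b * b^-1)) * a^-1); last by rewrite !isg_mulA.
by rewrite (idem_comm (idem_Vmul a) (idem_mulV b)) !isg_mulA inv_mul_inv inv_mul_invr.
Qed.

Lemma inv_mul_idem b e : idem e -> (b * e)^-1 = e * b^-1.
Proof. by move=> he; rewrite inv_mul idem_inv. Qed.

Lemma idem_conj b f : idem f -> idem (b^-1 * f * b).
Proof.
move=> hf; rewrite /idem.
rewrite (_ : _ * _ = b^-1 * (f * (b * b^-1)) * f * b); last by rewrite !isg_mulA.
by rewrite -(idem_comm (idem_mulV b) hf) !isg_mulA inv_mul_inv mulr_idem.
Qed.

Lemma idem_mul_conj b f : idem f -> f * b = b * (b^-1 * f * b).
Proof. by move=> hf; rewrite !isg_mulA (idem_comm (idem_mulV b) hf) !isg_mulA mul_inv_mulr. Qed.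

Lemma nle_mul_idem b e : idem e -> nle (b * e) b.
Proof.
move=> he; rewrite /nle inv_mul_idem //.
rewrite (_ : e * b^-1 * (b * e) = (e * (b^-1 * b)) * e); last by rewrite !isg_mulA.
by rewrite (idem_comm he (idem_Vmul b)) !isg_mulA mul_inv_mul mulr_idem.
Qed.

Lemma nle_idem_mul b f : idem f -> nle (f * b) b.
Proof. by move=> hf; rewrite idem_mul_conj //; apply/nle_mul_idem/idem_conj. Qed.

Lemma nle_dom a b : nle a b -> a^-1 * a = b^-1 * b * (a^-1 * a).
Proof.
rewrite /nle => hab.
have hdom : a^-1 * a = (a^-1 * a) * (b^-1 * b) * (a^-1 * a).
  have dom : a^-1 * a = a^-1 * a * b^-1 * (b * (a^-1 * a)).
    by rewrite -(inv_mul_idem b (idem_Vmul a)) -hab.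
  by rewrite {1}dom !isg_mulA.
by rewrite {1}hdom (idem_comm (idem_Vmul a) (idem_Vmul b)) (mulr_idem _ (idem_Vmul a)).
Qed.

Lemma nle_trans a b c : nle a b -> nle b c -> nle a c.
Proof. by move=> hab hbc; rewrite /nle {1}hab {1}hbc -isg_mulA -(nle_dom hab). Qed.

Lemma nle_anti a b : nle a b -> nle b a -> a = b.
Proof.
move=> hab hba.
have dom_eq : a^-1 * a = b^-1 * b.
  by rewrite (nle_dom hab) (idem_comm (idem_Vmul b) (idem_Vmul a)) -(nle_dom hba).
by rewrite hab dom_eq isg_mulA mul_inv_mul.
Qed.

Lemma nle_mull a b c : nle a b -> nle (c * a) (c * b).
Proof. by move=> hab; rewrite {1}hab isg_mulA; apply/nle_mul_idem/idem_Vmul. Qed.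

Lemma nle_mulr a b c : nle a b -> nle (a * c) (b * c).
Proof.
move=> hab; rewrite {1}hab -isg_mulA (idem_mul_conj c (idem_Vmul a)) isg_mulA.
exact/nle_mul_idem/idem_conj/idem_Vmul.
Qed.

Lemma nle_inv a b : nle a b -> nle a^-1 b^-1.
Proof.
by move=> hab; rewrite {1}hab (inv_mul_idem _ (idem_Vmul a)); apply/nle_idem_mul/idem_Vmul.
Qed.

Lemma idem_nle a e : idem e -> nle a e -> idem a.
Proof. by rewrite /nle => he ->; apply/idem_mul/idem_Vmul. Qed.

Lemma nle_idemE e f : idem e -> nle e f <-> e = f * e.
Proof. by move=> he; rewrite /nle idem_inv // he. Qed.

Lemma orthogonal_compatible a b : Defs.orthogonal a b -> compatible a b.
Proof. by case=> h1 h2; rewrite /compatible h1 h2; split; apply: idem0. Qed.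

Lemma orthogonal_mull a b c : Defs.orthogonal a b -> Defs.orthogonal (c * a) (c * b).
Proof.
case=> h1 h2; split.
  rewrite inv_mul -isg_mulA (isg_mulA c^-1) (idem_mul_conj b (idem_Vmul c)).
  by rewrite !isg_mulA h1 !isg_mul0l.
by rewrite inv_mul isg_mulA -(isg_mulA c) h2 isg_mul0r isg_mul0l.
Qed.

Lemma orthogonal_inv a b : Defs.orthogonal a b -> Defs.orthogonal a^-1 b^-1.
Proof. by case=> h1 h2; split; rewrite invK. Qed.

Lemma orthogonal_mulr a b c : Defs.orthogonal a b -> Defs.orthogonal (a * c) (b * c).
Proof.
move=> /orthogonal_inv /(orthogonal_mull c^-1) /orthogonal_inv.
by rewrite -!inv_mul !invK.
Qed.

Lemma compatible_idem e f : idem e -> idem f -> compatible e f.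
Proof. by move=> he hf; rewrite /compatible !idem_inv //; split; apply: idem_mul. Qed.

Lemma compatible_meet a b : compatible a b -> b * (a^-1 * a) = a * (b^-1 * b).
Proof.
case=> hab hba.
have abV : a * b^-1 = b * a^-1 by rewrite -(idem_inv hba) inv_mul invK.
have aVb : a^-1 * b = b^-1 * a by rewrite -(idem_inv hab) inv_mul invK.
have -> : b * (a^-1 * a) = a * a^-1 * b.
  by rewrite isg_mulA -abV -isg_mulA -aVb isg_mulA.
symmetry; transitivity (a * (a^-1 * a) * (b^-1 * b)).
  by rewrite (isg_mulA a a^-1 a) mul_inv_mul.
rewrite -isg_mulA (idem_comm (idem_Vmul a) (idem_Vmul b)).
transitivity ((a * b^-1) * (b * a^-1) * a); first by rewrite !isg_mulA.
by rewrite -abV hba -isg_mulA -aVb isg_mulA.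
Qed.

Lemma compatible_Vmul a b : compatible a b -> a^-1 * b = a^-1 * b * (a^-1 * a * (b^-1 * b)).
Proof.
case=> hab _; have aVb : a^-1 * b = b^-1 * a by rewrite -(idem_inv hab) inv_mul invK.
have kda : a^-1 * b * (a^-1 * a) = a^-1 * b by rewrite aVb isg_mulA mul_inv_mulr.
by rewrite (isg_mulA (a^-1 * b)) kda isg_mulA mul_inv_mulr.
Qed.

Lemma join_uniq a b j j' : is_join a b j -> is_join a b j' -> j = j'.
Proof.
by move=> [aj [bj jmin]] [aj' [bj' jmin']]; apply: nle_anti; [apply: jmin | apply: jmin'].
Qed.

Lemma is_join_of_nle a b b' j : is_join a b' j -> nle b' b -> nle b j -> is_join a b j.
Proof.
move=> [aj [_ jmin]] b'b bj; split=> //; split=> // c ac bc.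
by apply: jmin => //; apply: nle_trans bc.
Qed.

(* From e <= j we get e = e^-1 <= j^-1, hence e = e e <= j^-1 j; so j <= j^-1 j. *)
Lemma join_idem e f j : idem e -> idem f -> is_join e f j -> idem j.
Proof.
have below_dom g : idem g -> nle g j -> nle g (j^-1 * j).
  move=> hg gj; have gjV : nle g j^-1 by rewrite -(idem_inv hg); apply: nle_inv.
  by rewrite -{1}hg; apply: nle_trans (nle_mulr g gjV) (nle_mull j^-1 gj).
move=> he hf [ej [fj jmin]]; apply: idem_nle (idem_Vmul j) _.
by apply: jmin; apply: below_dom.
Qed.

Lemma is_joinE_of_join e f j : idem j -> is_join e f j -> is_joinE e f j.
Proof. by move=> hj [ej [fj jmin]]; do 3!split=> //; move=> c _; apply: jmin. Qed.

Section CompatibleJoins.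
Hypothesis join_exists : forall a b, compatible a b -> exists j, is_join a b j.

Lemma is_join_of_joinE e f m : idem e -> idem f -> is_joinE e f m -> is_join e f m.
Proof.
move=> he hf [hm [em [fm mmin]]].
have [k ek_fk] := join_exists (compatible_idem he hf).
have km : nle k m by apply: ek_fk.2.2.
have mk : nle m k by apply: mmin; [apply: idem_nle hm km | apply: ek_fk.1 | apply: ek_fk.2.1].
by rewrite (nle_anti mk km).
Qed.

Lemma is_boolean_of_compl :
  (forall a b j c, compatible a b -> is_join a b j ->
     is_join (c * a) (c * b) (c * j) /\ is_join (a * c) (b * c) (j * c)) ->
  (forall e f, idem e -> idem f -> nle e f ->
     exists g, [/\ idem g, e * g = 0 & is_join e g f]) ->
  is_boolean S.
Proof.
move=> join_distr compl; split=> //; split=> //; split.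
  move=> e f he hf; have [j hj] := join_exists (compatible_idem he hf).
  by exists j; apply: is_joinE_of_join (join_idem he hf hj) hj.
split.
  move=> e f g j he hf hg hj.
  have [ej _] := join_distr _ _ _ e (compatible_idem hf hg) (is_join_of_joinE hf hg hj).
  exact/is_joinE_of_join/ej/idem_mul/hj.1.
move=> e f he hf ef; have [g [hg eg0 hj]] := compl e f he hf ef.
by exists g; split=> //; split=> //; apply: is_joinE_of_join.
Qed.
End CompatibleJoins.
End InverseSemigroup.

Section Homomorphisms.
Variables S T : InvSemigroup0.
Variable h : S -> T.
Hypothesis hM : forall a b, h (isg_mul a b) = isg_mul (h a) (h b).

Lemma hom_inv a : h (isg_inv a) = isg_inv (h a).
Proof. by apply: isg_inv_uniq; rewrite -!hM ?mul_inv_mul ?inv_mul_inv. Qed.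

Lemma hom_compatible a b : compatible a b -> compatible (h a) (h b).
Proof. by case=> hab hba; rewrite /compatible /idem -!hom_inv -!hM hab hba. Qed.

Lemma zhom_orthogonal a b : h (isg_zero S) = isg_zero T ->
  Defs.orthogonal a b -> Defs.orthogonal (h a) (h b).
Proof. by move=> h0 [hab hba]; split; rewrite -hom_inv -hM ?hab ?hba. Qed.
End Homomorphisms.

Lemma zhom_comp (S T U : InvSemigroup0) (f : S -> T) (h : T -> U) :
  zhom f -> zhom h -> zhom (h \o f).
Proof. by move=> [fM f0] [hM h0]; split=> [a b|] /=; rewrite ?fM ?hM ?f0 ?h0. Qed.

Lemma joins_comp (S T U : InvSemigroup0) (f : S -> T) (h : T -> U) :
  (forall a b, f (isg_mul a b) = isg_mul (f a) (f b)) ->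
  preserves_compatible_joins f -> preserves_compatible_joins h ->
  preserves_compatible_joins (h \o f).
Proof.
move=> fM f_joins h_joins a b j hab hj.
by apply/h_joins/f_joins; first exact: hom_compatible.
Qed.

Section AdditiveJoin.
Variable B : InvSemigroup0.
Hypothesis hB : is_boolean B.
Variable R : pzRingType.
Variable phi : B -> R.
Hypothesis phiM : forall a b, phi (isg_mul a b) = (phi a * phi b)%R.
Hypothesis phiA :
  forall a b j, Defs.orthogonal a b -> is_join a b j -> phi j = (phi a + phi b)%R.
Local Notation "a * b" := (isg_mul a b).
Local Notation "a ^-1" := (isg_inv a).
Local Notation "0" := (isg_zero B).

(* With g the complement of e := a^-1 a b^-1 b in b^-1 b, the join of a and b is the
   orthogonal join of a and b g, and phi (b g) = phi b - phi (b e). *)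
Lemma additive_join a b j : compatible a b -> is_join a b j ->
  phi j = (phi a + phi b - phi (isg_mul b (isg_mul (isg_inv a) a)))%R.
Proof.
move=> hab hj.
set da := a^-1 * a; set db := b^-1 * b; set e := da * db.
have hda : idem da := idem_Vmul a; have hdb : idem db := idem_Vmul b.
have he : idem e := idem_mul hda hdb.
have edb : nle e db by apply/(nle_idemE _ he); rewrite /e (idem_comm hda hdb) isg_mulA hdb.
have [g [hg [eg0 ge_db]]] := hB.2.2.2.2 e db he hdb edb.
have gdb : g = db * g by apply/(nle_idemE _ hg); apply: ge_db.2.2.1.
have {}ge_db : is_join e g db := is_join_of_joinE hB.1 he hg ge_db.
have eg_orth : Defs.orthogonal e g by rewrite /Defs.orthogonal !idem_inv.
have bb : b * db = b by rewrite /db isg_mulA mul_inv_mul.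
have be : b * e = b * da by rewrite /e (idem_comm hda hdb) isg_mulA bb.
have ag0 : a * g = 0.
  have a_da : a = a * da by rewrite /da isg_mulA mul_inv_mul.
  by rewrite gdb a_da -isg_mulA (isg_mulA da) -/e eg0 !isg_mul0r.
have abg_orth : Defs.orthogonal a (b * g).
  split; last by rewrite inv_mul_idem // isg_mulA ag0 isg_mul0l.
  by rewrite isg_mulA (compatible_Vmul hab) -/da -/db -/e -(isg_mulA _ e g) eg0 isg_mul0r.
have abg_join : is_join a (b * g) j.
  split; first exact: hj.1.
  split; first exact: nle_trans (nle_mul_idem b hg) hj.2.1.
  move=> c ac bgc; apply: hj.2.2 => //.
  have [be_bg _] := hB.2.1 e g db b (compatible_idem he hg) ge_db.
  rewrite -bb; apply: be_bg.2.2 => //.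
  rewrite be compatible_meet //; apply: nle_trans ac.
  exact: nle_mul_idem.
have phi_g : phi g = (phi db - phi e)%R by rewrite (phiA eg_orth ge_db) addrC addKr.
by rewrite (phiA abg_orth abg_join) phiM phi_g mulrBr -!phiM bb be addrA.
Qed.
End AdditiveJoin.

(** * The Boolean inverse semigroup generated by a representation *)

Local Open Scope ring_scope.

Section Hull.
Variables (M : InvSemigroup0) (R : pzRingType) (psi : M -> R).
Hypothesis psiM : forall a b, psi (isg_mul a b) = psi a * psi b.
Implicit Types p q x y u v : R.

Inductive gen_idem : R -> Prop :=
| gen_idem_img e : idem e -> gen_idem (psi e)
| gen_idem1 : gen_idem 1
| gen_idemM p q : gen_idem p -> gen_idem q -> gen_idem (p * q)
| gen_idem_compl p : gen_idem p -> gen_idem (1 - p).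

Lemma gen_idem_comm_img p e : gen_idem p -> idem e -> p * psi e = psi e * p.
Proof.
move=> hp he; elim: hp => [f hf | | p1 q _ IHp _ IHq | p1 _ IH].
- by rewrite -!psiM (idem_comm hf he).
- by rewrite mul1r mulr1.
- by rewrite -mulrA IHq mulrA IHp mulrA.
- by rewrite mulrBl mulrBr mul1r mulr1 IH.
Qed.

Lemma gen_idem_comm p q : gen_idem p -> gen_idem q -> p * q = q * p.
Proof.
move=> hp; elim=> [f hf | | q1 q2 _ IH1 _ IH2 | q1 _ IH].
- exact: gen_idem_comm_img.
- by rewrite mul1r mulr1.
- by rewrite mulrA IH1 -mulrA IH2 mulrA.
- by rewrite mulrBl mulrBr mul1r mulr1 IH.
Qed.

Lemma gen_idem_idem p : gen_idem p -> p * p = p.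
Proof.
elim=> [f hf | | p1 q1 hp IHp hq IHq | p1 _ IH].
- by rewrite -psiM hf.
- by rewrite mulr1.
- by rewrite mulrA -(mulrA p1 q1 p1) (gen_idem_comm hq hp) mulrA IHp -mulrA IHq.
- by rewrite mulrBl !mulrBr !mul1r !mulr1 IH subrr subr0.
Qed.

Lemma gen_idem0 : gen_idem 0.
Proof. by rewrite -(subrr 1); apply/gen_idem_compl/gen_idem1. Qed.

Lemma gen_idemD p q : gen_idem p -> gen_idem q -> p * q = 0 -> gen_idem (p + q).
Proof.
move=> hp hq pq0.
have -> : p + q = 1 - (1 - p) * (1 - q).
  by rewrite mulrBl !mulrBr !mul1r !mulr1 pq0 subr0 opprB addrCA opprB (addrC 1) subrK.
by apply/gen_idem_compl/gen_idemM; apply: gen_idem_compl.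
Qed.

Lemma gen_idem_conj s p : gen_idem p -> gen_idem (psi s * p * psi (isg_inv s)).
Proof.
elim=> [e he | | p1 q1 hp IHp hq IHq | p1 hp IH].
- by rewrite -!psiM; apply/gen_idem_img; rewrite -{1}(invK s); apply: idem_conj.
- by rewrite mulr1 -psiM; apply/gen_idem_img/idem_mulV.
- have -> : psi s * (p1 * q1) * psi (isg_inv s) =
            (psi s * p1 * psi (isg_inv s)) * (psi s * q1 * psi (isg_inv s)).
    symmetry; rewrite !mulrA -(mulrA _ (psi (isg_inv s)) (psi s)) -psiM.
    rewrite -(mulrA (psi s) p1) (gen_idem_comm_img hp (idem_Vmul s)).
    by rewrite (mulrA (psi s)) -psiM isg_mulA mul_inv_mul.
  exact: gen_idemM.
- have -> : psi s * (1 - p1) * psi (isg_inv s) =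
            psi (isg_mul s (isg_inv s)) * (1 - psi s * p1 * psi (isg_inv s)).
    rewrite !mulrBr !mulrBl !mulr1 !mulrA -(psiM s (isg_inv s)).
    by rewrite -(psiM (isg_mul s (isg_inv s)) s) mul_inv_mul.
  by apply: gen_idemM; [apply/gen_idem_img/idem_mulV | apply: gen_idem_compl].
Qed.

Definition regular_pair x y :=
  [/\ x * y * x = x, y * x * y = y, gen_idem (x * y) & gen_idem (y * x)].

Definition inverse_pair x y :=
  [/\ x * y * x = x, y * x * y = y &
      forall p, gen_idem p -> gen_idem (x * p * y) /\ gen_idem (y * p * x)].

Lemma inverse_pair_sym x y : inverse_pair x y -> inverse_pair y x.
Proof. by case=> h1 h2 h3; split=> // p hp; have [] := h3 p hp. Qed.

Lemma inverse_pair_regular x y : inverse_pair x y -> regular_pair x y.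
Proof. by case=> h1 h2 h3; split=> //; have [] := h3 1 gen_idem1; rewrite !mulr1. Qed.

Lemma regular_pair_uniq x y y' : regular_pair x y -> regular_pair x y' -> y = y'.
Proof.
move=> [h1 h2 h3 h4] [k1 k2 k3 k4].
have y_eq : y = y' * x * y.
  transitivity (y * (x * y' * x) * y); first by rewrite k1 h2.
  transitivity ((y' * x) * (y * x) * y); first by rewrite -(gen_idem_comm h4 k4) !mulrA.
  by rewrite -mulrA h2.
have y'_eq : y' = y' * x * y.
  transitivity (y' * (x * y * x) * y'); first by rewrite h1 k2.
  transitivity (y' * ((x * y) * (x * y'))); first by rewrite !mulrA.
  by rewrite (gen_idem_comm h3 k3) !mulrA k2.
by rewrite y'_eq -y_eq.
Qed.

Lemma regular_pair_mul_gen x y p v : regular_pair x y -> gen_idem p -> x * v = 0 ->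
  x * p * v = 0.
Proof.
move=> [hx _ _ hyx] hp xv0.
transitivity (x * ((y * x) * p) * v); first by rewrite !mulrA hx.
by rewrite -(gen_idem_comm hp hyx) -!mulrA xv0 !mulr0.
Qed.

Lemma regular_pair_orth x y u v : regular_pair x y -> regular_pair u v -> x * v = 0 ->
  u * y = 0.
Proof.
move=> [hx hy _ hyx] [hu _ _ hvu] xv0.
transitivity (u * ((v * u) * (y * x)) * y).
  by rewrite !mulrA hu -(mulrA u y x) -(mulrA u (y * x) y) hy.
rewrite (gen_idem_comm hvu hyx).
transitivity ((u * y) * (x * v) * (u * y)); first by rewrite !mulrA.
by rewrite xv0 mulr0 mul0r.
Qed.

Lemma inverse_pair_img s : inverse_pair (psi s) (psi (isg_inv s)).
Proof.
split; rewrite -?psiM ?mul_inv_mul ?inv_mul_inv // => p hp.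
by split; [|rewrite -{2}(invK s)]; apply: gen_idem_conj.
Qed.

Lemma inverse_pair_gen p : gen_idem p -> inverse_pair p p.
Proof.
move=> hp; have pp := gen_idem_idem hp.
split; rewrite ?pp // => q hq.
by rewrite -mulrA (gen_idem_comm hq hp) mulrA pp; split; apply: gen_idemM.
Qed.

Lemma inverse_pair_mul x y u v : inverse_pair x y -> inverse_pair u v ->
  inverse_pair (x * u) (v * y).
Proof.
move=> hxy huv; have [h1 h2 h3] := hxy; have [k1 k2 k3] := huv.
have [_ _ _ hyx] := inverse_pair_regular hxy; have [_ _ huv' _] := inverse_pair_regular huv.
split.
- transitivity (x * ((u * v) * (y * x)) * u); first by rewrite !mulrA.
  by rewrite (gen_idem_comm huv' hyx) !mulrA h1 -(mulrA x u v) -(mulrA x (u * v) u) k1.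
- transitivity (v * ((y * x) * (u * v)) * y); first by rewrite !mulrA.
  by rewrite -(gen_idem_comm huv' hyx) !mulrA k2 -(mulrA v y x) -(mulrA v (y * x) y) h2.
- move=> p hp; split.
  + by have [g _] := h3 _ (k3 p hp).1; rewrite !mulrA in g *.
  + by have [_ g] := k3 _ (h3 p hp).2; rewrite !mulrA in g *.
Qed.

Lemma inverse_pair_add x y u v : inverse_pair x y -> inverse_pair u v ->
  y * u = 0 -> x * v = 0 -> inverse_pair (x + u) (y + v).
Proof.
move=> hxy huv yu0 xv0; have [h1 h2 h3] := hxy; have [k1 k2 k3] := huv.
have rxy := inverse_pair_regular hxy; have ruv := inverse_pair_regular huv.
have uy0 : u * y = 0 := regular_pair_orth rxy ruv xv0.
have vx0 : v * x = 0 := regular_pair_orth (inverse_pair_regular (inverse_pair_sym hxy))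
  (inverse_pair_regular (inverse_pair_sym huv)) yu0.
have xu_yv : (x + u) * (y + v) = x * y + u * v.
  by rewrite mulrDl !mulrDr xv0 uy0 addr0 add0r.
have yv_xu : (y + v) * (x + u) = y * x + v * u.
  by rewrite mulrDl !mulrDr yu0 vx0 addr0 add0r.
split.
- by rewrite xu_yv mulrDl !mulrDr -!mulrA yu0 vx0 !mulr0 addr0 add0r !mulrA h1 k1.
- by rewrite yv_xu mulrDl !mulrDr -!mulrA xv0 uy0 !mulr0 addr0 add0r !mulrA h2 k2.
move=> p hp; have [gx gy] := h3 p hp; have [gu gv] := k3 p hp; split.
- rewrite !mulrDl !mulrDr (regular_pair_mul_gen rxy hp xv0).
  rewrite (regular_pair_mul_gen ruv hp uy0) addr0 add0r.
  by apply: gen_idemD => //; rewrite -!mulrA (mulrA y u) yu0 mul0r !mulr0.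
- have ryx := inverse_pair_regular (inverse_pair_sym hxy).
  have rvu := inverse_pair_regular (inverse_pair_sym huv).
  rewrite !mulrDl !mulrDr (regular_pair_mul_gen ryx hp yu0).
  rewrite (regular_pair_mul_gen rvu hp vx0) addr0 add0r.
  by apply: gen_idemD => //; rewrite -!mulrA (mulrA x v) xv0 mul0r !mulr0.
Qed.

Inductive gen_pair : R -> R -> Prop :=
| gen_pair_img s : gen_pair (psi s) (psi (isg_inv s))
| gen_pair_idem p : gen_idem p -> gen_pair p p
| gen_pairM x y u v : gen_pair x y -> gen_pair u v -> gen_pair (x * u) (v * y)
| gen_pairD x y u v : gen_pair x y -> gen_pair u v -> y * u = 0 -> x * v = 0 ->
    gen_pair (x + u) (y + v).

Lemma gen_pair_sym x y : gen_pair x y -> gen_pair y x.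
Proof.
elim=> {x y} [s | p hp | x y u v _ IH1 _ IH2 | x y u v _ IH1 _ IH2 yu0 xv0].
- by rewrite -{2}(invK s); apply: gen_pair_img.
- exact: gen_pair_idem.
- exact: gen_pairM.
- exact: gen_pairD.
Qed.

Lemma gen_pair_inverse x y : gen_pair x y -> inverse_pair x y.
Proof.
elim=> {x y} [s | p hp | x y u v _ IH1 _ IH2 | x y u v _ IH1 _ IH2 yu0 xv0].
- exact: inverse_pair_img.
- exact: inverse_pair_gen.
- exact: inverse_pair_mul.
- exact: inverse_pair_add.
Qed.

Definition in_hull x := exists y, gen_pair x y.

Definition pinv x : R := epsilon (inhabits 0) (gen_pair x).

Lemma pinv_gen_pair x : in_hull x -> gen_pair x (pinv x).
Proof. exact: epsilon_spec. Qed.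

Lemma gen_pair_pinv x y : gen_pair x y -> pinv x = y.
Proof.
move=> hxy; have hx := pinv_gen_pair (ex_intro _ y hxy).
by apply: (@regular_pair_uniq x); apply/inverse_pair_regular/gen_pair_inverse.
Qed.

Lemma in_hull_inverse_pair x : in_hull x -> inverse_pair x (pinv x).
Proof. by move/pinv_gen_pair/gen_pair_inverse. Qed.

Lemma in_hullM x y : in_hull x -> in_hull y -> in_hull (x * y).
Proof. by move=> [x' hx] [y' hy]; exists (y' * x'); apply: gen_pairM. Qed.

Lemma in_hull_pinv x : in_hull x -> in_hull (pinv x).
Proof. by move=> hx; exists x; apply/gen_pair_sym/pinv_gen_pair. Qed.

Lemma in_hull_gen p : gen_idem p -> in_hull p.
Proof. by move=> hp; exists p; apply: gen_pair_idem. Qed.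

Lemma in_hull_img s : in_hull (psi s).
Proof. by exists (psi (isg_inv s)); apply: gen_pair_img. Qed.

(* pinv z = (pinv z z) (z pinv z) is a generated idempotent, and z = pinv z by
   uniqueness of inverses in regular pairs. *)
Lemma in_hull_idem z : in_hull z -> z * z = z -> gen_idem z.
Proof.
move=> hz zz; have hpair := in_hull_inverse_pair hz.
have [_ zwz gzw gwz] := inverse_pair_regular hpair.
have gen_w : gen_idem (pinv z).
  rewrite (_ : pinv z = (pinv z * z) * (z * pinv z)); first exact: gen_idemM.
  by rewrite !mulrA -(mulrA (pinv z) z z) zz zwz.
suff -> : z = pinv z by [].
apply: (@regular_pair_uniq (pinv z)).
- exact/inverse_pair_regular/inverse_pair_sym.
- exact/inverse_pair_regular/inverse_pair_gen.
Qed.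

Definition hull_car := {x : R | in_hull x}.

Lemma hull_inj (a b : hull_car) : sval a = sval b -> a = b.
Proof. by case: a b => [x hx] [y hy] /= xy; subst y; congr exist; apply: proof_irrelevance. Qed.

Definition hull_mul (a b : hull_car) : hull_car :=
  exist _ (sval a * sval b) (in_hullM (svalP a) (svalP b)).
Definition hull_inv (a : hull_car) : hull_car := exist _ (pinv (sval a)) (in_hull_pinv (svalP a)).
Definition hull_zero : hull_car := exist _ 0 (in_hull_gen gen_idem0).

Lemma hull_mulA a b c : hull_mul a (hull_mul b c) = hull_mul (hull_mul a b) c.
Proof. by apply: hull_inj; rewrite /= mulrA. Qed.

Lemma hull_mul_inv_mul a : hull_mul (hull_mul a (hull_inv a)) a = a.
Proof. by apply: hull_inj; case: (in_hull_inverse_pair (svalP a)). Qed.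

Lemma hull_inv_mul_inv a : hull_mul (hull_mul (hull_inv a) a) (hull_inv a) = hull_inv a.
Proof. by apply: hull_inj; case: (in_hull_inverse_pair (svalP a)). Qed.

Lemma hull_inv_uniq a b : hull_mul (hull_mul a b) a = a -> hull_mul (hull_mul b a) b = b ->
  b = hull_inv a.
Proof.
move=> /(congr1 sval) /= aba /(congr1 sval) /= bab; apply: hull_inj => /=.
have gab : gen_idem (sval a * sval b).
  by apply: in_hull_idem; [apply: in_hullM (svalP a) (svalP b) | rewrite mulrA aba].
have gba : gen_idem (sval b * sval a).
  by apply: in_hull_idem; [apply: in_hullM (svalP b) (svalP a) | rewrite mulrA bab].
apply: (@regular_pair_uniq (sval a)); first by split.
exact/inverse_pair_regular/in_hull_inverse_pair/svalP.
Qed.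

Lemma hull_mul0l a : hull_mul hull_zero a = hull_zero.
Proof. by apply: hull_inj; rewrite /= mul0r. Qed.

Lemma hull_mul0r a : hull_mul a hull_zero = hull_zero.
Proof. by apply: hull_inj; rewrite /= mulr0. Qed.

Definition hull : InvSemigroup0 :=
  Build_InvSemigroup0 hull_mulA hull_mul_inv_mul hull_inv_mul_inv hull_inv_uniq
    hull_mul0l hull_mul0r.

Definition to_hull (s : M) : hull := exist _ (psi s) (in_hull_img s).

Local Notation "a ** b" := (@isg_mul hull a b) (at level 40, left associativity).

Lemma hull_idemE (a : hull) : idem a <-> gen_idem (sval a).
Proof.
split=> [aa | ga]; first exact: in_hull_idem (svalP a) (congr1 sval aa).
by apply: hull_inj; apply: gen_idem_idem.
Qed.

Definition hull_gen p (hp : gen_idem p) : hull := exist _ p (in_hull_gen hp).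

Lemma hull_orth (p q : hull) : Defs.orthogonal p q ->
  [/\ pinv (sval p) * sval q = 0, sval p * pinv (sval q) = 0,
      sval q * pinv (sval p) = 0 & pinv (sval q) * sval p = 0].
Proof.
case=> /(congr1 sval) /= h1 /(congr1 sval) /= h2.
have hp := in_hull_inverse_pair (svalP p); have hq := in_hull_inverse_pair (svalP q).
split=> //; first exact: regular_pair_orth (inverse_pair_regular hp) (inverse_pair_regular hq) h2.
exact: regular_pair_orth (inverse_pair_regular (inverse_pair_sym hp))
  (inverse_pair_regular (inverse_pair_sym hq)) h1.
Qed.

Lemma in_hull_orth (p q : hull) : Defs.orthogonal p q -> in_hull (sval p + sval q).
Proof.
move/hull_orth=> [h1 h2 _ _]; exists (pinv (sval p) + pinv (sval q)).
by apply: gen_pairD => //; apply/pinv_gen_pair/svalP.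
Qed.

Lemma hull_orth_join (p q s : hull) : Defs.orthogonal p q -> sval s = sval p + sval q ->
  is_join p q s.
Proof.
move=> hpq hs; have [o1 o2 o3 o4] := hull_orth hpq.
have [p1 _ _] := in_hull_inverse_pair (svalP p).
have [q1 _ _] := in_hull_inverse_pair (svalP q).
have sV : pinv (sval s) = pinv (sval p) + pinv (sval q).
  by rewrite hs; apply/gen_pair_pinv/gen_pairD => //; apply/pinv_gen_pair/svalP.
rewrite /is_join /nle; split; [|split].
- by apply: hull_inj; rewrite /= hs mulrDl mulrA p1 mulrA o3 mul0r addr0.
- by apply: hull_inj; rewrite /= hs mulrDl mulrA o2 mul0r add0r mulrA q1.
- move=> d /(congr1 sval) /= pd /(congr1 sval) /= qd; apply: hull_inj => /=.
  rewrite sV hs mulrDl (mulrDr (pinv (sval p))) (mulrDr (pinv (sval q))) o1 o4.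
  by rewrite addr0 add0r mulrDr -pd -qd.
Qed.

Lemma gen_idem_dom_compl (a : hull) : gen_idem (1 - pinv (sval a) * sval a).
Proof.
apply: gen_idem_compl.
by have [_ _ _] := inverse_pair_regular (in_hull_inverse_pair (svalP a)).
Qed.

Definition dom_compl (a : hull) : hull := hull_gen (gen_idem_dom_compl a).

Lemma idem_dom_compl a : idem (dom_compl a).
Proof. exact/hull_idemE/gen_idem_dom_compl. Qed.

Lemma hull_compatible_orth (a b : hull) : compatible a b ->
  Defs.orthogonal a (b ** dom_compl a).
Proof.
case=> /hull_idemE /= gab _.
have [a1 a2 _] := in_hull_inverse_pair (svalP a).
have ag0 : a ** dom_compl a = isg_zero hull.
  by apply: hull_inj; rewrite /= mulrBr mulr1 mulrA a1 subrr.
split.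
  rewrite isg_mulA; apply: hull_inj => /=.
  rewrite (gen_idem_comm gab (gen_idem_dom_compl a)) mulrBl mul1r -!mulrA (mulrA (sval a)).
  by rewrite !mulrA a2 subrr.
by rewrite (inv_mul_idem _ (idem_dom_compl a)) isg_mulA ag0 isg_mul0l.
Qed.

Lemma hull_compatible_join (a b j : hull) : compatible a b ->
  sval j = sval a + sval b * (1 - pinv (sval a) * sval a) -> is_join a b j.
Proof.
move=> hab hj.
apply: (is_join_of_nle (b' := b ** dom_compl a)).
- exact: hull_orth_join (hull_compatible_orth hab) hj.
- exact/nle_mul_idem/idem_dom_compl.
apply: hull_inj; rewrite /= hj.
have [b1 _ _] := in_hull_inverse_pair (svalP b).
have [_ _ _ gb] := inverse_pair_regular (in_hull_inverse_pair (svalP b)).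
have meet := congr1 sval (compatible_meet hab); rewrite /= in meet.
rewrite mulrDl -meet -(mulrA (sval b) (1 - _)) (gen_idem_comm (gen_idem_dom_compl a) gb).
by rewrite (mulrA (sval b) (pinv _ * _)) mulrBr mulr1 !mulrA b1 addrC subrK.
Qed.

Lemma hull_join_exists (a b : hull) : compatible a b -> exists j, is_join a b j.
Proof.
move=> hab; exists (exist _ _ (in_hull_orth (hull_compatible_orth hab))).
exact: hull_compatible_join.
Qed.

Lemma hull_join_val (a b j : hull) : compatible a b -> is_join a b j ->
  sval j = sval a + sval b * (1 - pinv (sval a) * sval a).
Proof.
move=> hab hj.
have hj' := hull_compatible_join (j := exist _ _ (in_hull_orth (hull_compatible_orth hab))) hab.
by rewrite (join_uniq hj (hj' erefl)).
Qed.

Lemma hull_join_distr (a b j c : hull) : compatible a b -> is_join a b j ->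
  is_join (c ** a) (c ** b) (c ** j) /\ is_join (a ** c) (b ** c) (j ** c).
Proof.
move=> hab hj; have ho := hull_compatible_orth hab; have hj_val := hull_join_val hab hj.
have bg_b : nle (b ** dom_compl a) b by apply/nle_mul_idem/idem_dom_compl.
split.
- apply: is_join_of_nle (nle_mull c bg_b) (nle_mull c hj.2.1).
  by apply: hull_orth_join (orthogonal_mull c ho) _; rewrite /= hj_val mulrDr.
- apply: is_join_of_nle (nle_mulr c bg_b) (nle_mulr c hj.2.1).
  by apply: hull_orth_join (orthogonal_mulr c ho) _; rewrite /= hj_val mulrDl.
Qed.

Lemma hull_compl (e f : hull) : idem e -> idem f -> nle e f ->
  exists g, [/\ idem g, e ** g = isg_zero hull & is_join e g f].
Proof.
move=> he hf /(nle_idemE _ he) /(congr1 sval) /= fe.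
have ge := (hull_idemE e).1 he; have gf := (hull_idemE f).1 hf.
have gg := gen_idemM gf (gen_idem_compl ge).
have eg0 : sval e * (sval f * (1 - sval e)) = 0.
  by rewrite mulrA (gen_idem_comm ge gf) -fe mulrBr mulr1 (gen_idem_idem ge) subrr.
have hg : idem (hull_gen gg) by apply/hull_idemE.
exists (hull_gen gg); split=> //; first exact: hull_inj.
apply: hull_orth_join; first by split; rewrite ?idem_inv //; apply: hull_inj.
by rewrite /= mulrBr mulr1 -fe addrC subrK.
Qed.

Lemma hull_boolean : is_boolean hull.
Proof. exact: is_boolean_of_compl hull_join_exists hull_join_distr hull_compl. Qed.

Lemma to_hull_zhom : psi (isg_zero M) = 0 -> zhom to_hull.
Proof. by move=> psi0; split=> [a b|]; apply: hull_inj; rewrite /= ?psiM ?psi0. Qed.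

Lemma hull_orth_join_val (a b j : hull) : Defs.orthogonal a b -> is_join a b j ->
  sval j = sval a + sval b.
Proof.
move=> hab hj.
have hj' := hull_orth_join (s := exist _ _ (in_hull_orth hab)) hab erefl.
by rewrite (join_uniq hj hj').
Qed.
End Hull.

(** * Extension along the Booleanization *)

Section HullInclusion.
Variables (S B : InvSemigroup0) (R : pzRingType) (theta : S -> R) (phi : B -> R).
Variable beta : S -> B.
Hypothesis thetaM : forall a b, theta (isg_mul a b) = theta a * theta b.
Hypothesis phiM : forall a b, phi (isg_mul a b) = phi a * phi b.
Hypothesis betaM : forall a b, beta (isg_mul a b) = isg_mul (beta a) (beta b).
Hypothesis phi_beta : forall s, phi (beta s) = theta s.

Lemma gen_idem_incl p : gen_idem theta p -> gen_idem phi p.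
Proof.
elim=> {p} [e he | | p q _ hp _ hq | p _ hp].
- by rewrite -phi_beta; apply: gen_idem_img; rewrite /idem -betaM he.
- exact: gen_idem1.
- exact: gen_idemM.
- exact: gen_idem_compl.
Qed.

Lemma gen_pair_incl x y : gen_pair theta x y -> gen_pair phi x y.
Proof.
elim=> [s | p hp | x1 y1 u v _ IH1 _ IH2 | x1 y1 u v _ IH1 _ IH2 h1 h2].
- by rewrite -!phi_beta (hom_inv betaM); apply: gen_pair_img.
- exact/gen_pair_idem/gen_idem_incl.
- exact: gen_pairM.
- exact: gen_pairD.
Qed.

Lemma in_hull_incl x : in_hull theta x -> in_hull phi x.
Proof. by case=> y hxy; exists y; apply: gen_pair_incl. Qed.

Definition hull_incl (x : hull thetaM) : hull phiM := exist _ (sval x) (in_hull_incl (svalP x)).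

Lemma hull_inclM a b : hull_incl (isg_mul a b) = isg_mul (hull_incl a) (hull_incl b).
Proof. exact: hull_inj. Qed.

Lemma hull_incl_zhom : zhom hull_incl.
Proof. by split; [apply: hull_inclM | apply: hull_inj]. Qed.

Lemma hull_incl_joins : preserves_compatible_joins hull_incl.
Proof.
move=> a b j hab hj; apply: hull_compatible_join.
  exact: (hom_compatible (h := hull_incl) hull_inclM hab).
have pinv_incl := congr1 sval (hom_inv hull_inclM a).
by rewrite /= in pinv_incl; rewrite /= -pinv_incl (hull_join_val hab hj).
Qed.
End HullInclusion.

Lemma to_hull_joins (B : InvSemigroup0) (R : pzRingType) (phi : B -> R)
    (phiM : forall a b, phi (isg_mul a b) = phi a * phi b) :
  is_boolean B -> phi (isg_zero B) = 0 ->
  (forall a b j, Defs.orthogonal a b -> is_join a b j -> phi j = phi a + phi b) ->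
  preserves_compatible_joins (to_hull phiM).
Proof.
move=> hB phi0 phiA a b j hab hj; have [toM _] := to_hull_zhom phiM phi0.
apply: hull_compatible_join; first exact: (hom_compatible (h := to_hull phiM) toM hab).
have pinv_phi := congr1 sval (hom_inv toM a); rewrite /= in pinv_phi.
rewrite /= -pinv_phi (additive_join hB phiM phiA hab hj).
by rewrite mulrBr mulr1 !phiM mulrA addrA.
Qed.

Section Extension.
Variables (S B : InvMonoid0) (R : pzRingType) (theta : S -> R) (beta : S -> B).
Hypothesis thetaM : forall a b, theta (isg_mul a b) = theta a * theta b.
Hypothesis theta1 : theta (im_one S) = 1.
Hypothesis beta_univ : is_booleanization beta.
Variable g : B -> hull thetaM.
Hypothesis g_zhom : zhom g.
Hypothesis g_joins : preserves_compatible_joins g.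
Hypothesis g_beta : forall s, g (beta s) = to_hull thetaM s.

Lemma hull_extension_additive : additive_rep (fun b => sval (g b)).
Proof.
have [_ [_ [[_ beta1] _]]] := beta_univ; have [gM g0] := g_zhom.
split; first split; [|split|].
- by move=> a b; rewrite gM.
- by rewrite -beta1 g_beta.
- by rewrite g0.
move=> a b j hab hj; apply: hull_orth_join_val.
  exact: (zhom_orthogonal (h := g) gM g0 hab).
exact: g_joins (orthogonal_compatible hab) hj.
Qed.

Lemma additive_extension_uniq (phi : B -> R) : additive_rep phi ->
  (forall s, phi (beta s) = theta s) -> phi = (fun b => sval (g b)).
Proof.
move=> [[phiM [_ phi0]] phiA] phi_beta.
have [hB [beta_zhom [_ [_ univ]]]] := beta_univ.
have phi_zhom := to_hull_zhom phiM phi0.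
have [k [_ k_uniq]] := univ _ _ (hull_boolean phiM) (zhom_comp beta_zhom phi_zhom).
have phi_eq : k = to_hull phiM.
  by apply: k_uniq; split=> //; split=> //; apply: to_hull_joins.
have incl_eq : k = hull_incl phiM beta_zhom.1 phi_beta \o g.
  apply: k_uniq; split.
    exact: zhom_comp g_zhom (hull_incl_zhom thetaM phiM beta_zhom.1 phi_beta).
  split; first exact: (joins_comp (f := g) g_zhom.1 g_joins
    (hull_incl_joins phiM beta_zhom.1 phi_beta)).
  by move=> s; apply: hull_inj; rewrite /= g_beta /= phi_beta.
apply: functional_extensionality => b.
by have := congr1 (fun k => sval (k b)) (etrans (esym phi_eq) incl_eq).
Qed.
End Extension.

Unset Implicit Arguments.
Theorem proposition3p3 (S : InvMonoid0) (R : pzRingType) (theta : S -> R)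
  (B : InvMonoid0) (beta : S -> B) :
  representation theta ->
  is_booleanization beta ->
  exists! theta_star : B -> R,
    additive_rep theta_star /\ forall s, theta_star (beta s) = theta s.
Proof.
move=> [thetaM [theta1 theta0]] beta_univ.
have [_ [_ [_ [_ univ]]]] := beta_univ.
have [g [[g_zhom [g_joins g_beta]] _]] :=
  univ _ _ (hull_boolean thetaM) (to_hull_zhom thetaM theta0).
exists (fun b => sval (g b)); split.
  split; first exact: (hull_extension_additive theta1 beta_univ g_zhom g_joins g_beta).
  by move=> s; rewrite g_beta.
move=> phi [phi_add phi_beta]; symmetry.
exact: additive_extension_uniq phi_add phi_beta.
Qed.
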